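(* Let $(M,s)$ be an $\mathbf{S5}$-state such that every $u\in M[S]$ is reachable from $s$, let $i$ be an agent and $\psi$ a fluent formula. Then $(M,s)\models\mathbf C(\neg\mathbf B_i\psi\wedge\neg\mathbf B_i\neg\psi)$ iff for every $u\in M[S]$ there exists $v\in M[S]$ with $(u,v)\in M[i]$ such that $\psi$ has different truth values in $M[\pi](u)$ and $M[\pi](v)$.
   Context: Agents $\mathcal{AG}=\{1,\dots,n\}$, fluents $\mathcal F$. Belief formulae are built from propositional (fluent) formulae over $\mathcal F$ with $\mathbf B_i$, Boolean connectives, $\mathbf E_\alpha,\mathbf C_\alpha$; $\mathbf C=\mathbf C_{\mathcal{AG}}$. Kripke structures $M$: worlds $M[S]$, interpretations $M[\pi](u)\subseteq\mathcal F$, relations $M[i]$; standard semantics ($\mathbf B_i\varphi$: $\varphi$ at all $M[i]$-successors; $\mathbf E_\alpha\varphi$: all $\mathbf B_i\varphi$, $i\in\alpha$; $\mathbf C_\alpha\varphi$: $\mathbf E_\alpha^k\varphi$ for all $k\ge0$). $(M,s)$ is an $\mathbf{S5}$-state if each $M[i]$ is an equivalence relation. $v$ is reachable from $u$ if connected to it by a finite (possibly empty) chain of pairs each in some $M[j]$. *)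

Set Implicit Arguments.

Inductive fform (F : Type) : Type :=
| FAtom : F -> fform F
| FTrue : fform F
| FFalse : fform F
| FNot : fform F -> fform F
| FAnd : fform F -> fform F -> fform F
| FOr : fform F -> fform F -> fform F
| FImp : fform F -> fform F -> fform F.

Arguments FTrue {F}. Arguments FFalse {F}.

Fixpoint fsat (F : Type) (I : F -> Prop) (p : fform F) : Prop :=
  match p with
  | FAtom f => I f
  | FTrue => True
  | FFalse => False
  | FNot q => ~ fsat I q
  | FAnd q r => fsat I q /\ fsat I r
  | FOr q r => fsat I q \/ fsat I r
  | FImp q r => fsat I q -> fsat I r
  end.

Inductive bform (F Ag : Type) : Type :=
| BF : fform F -> bform F Ag
| BB : Ag -> bform F Ag -> bform F Ag
| BNot : bform F Ag -> bform F Ag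
| BAnd : bform F Ag -> bform F Ag -> bform F Ag
| BOr : bform F Ag -> bform F Ag -> bform F Ag
| BImp : bform F Ag -> bform F Ag -> bform F Ag
| BE : (Ag -> Prop) -> bform F Ag -> bform F Ag
| BC : (Ag -> Prop) -> bform F Ag -> bform F Ag.

Arguments BF {F Ag}. Arguments BB {F Ag}. Arguments BNot {F Ag}. Arguments BAnd {F Ag}.
Arguments BOr {F Ag}. Arguments BImp {F Ag}. Arguments BE {F Ag}. Arguments BC {F Ag}.

(* Kripke structures: worlds M[S], interpretation M[pi], relations M[i]. *)
Record kripke (F Ag : Type) : Type := Kripke {
  world : Type;
  interp : world -> F -> Prop;
  rel : Ag -> world -> world -> Prop
}.

Fixpoint Ek (F Ag : Type) (M : kripke F Ag) (alpha : Ag -> Prop) (k : nat)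
  (P : world M -> Prop) (u : world M) : Prop :=
  match k with
  | O => P u
  | S k' => forall i, alpha i -> forall v, rel M i u v -> Ek M alpha k' P v
  end.

Fixpoint sat (F Ag : Type) (M : kripke F Ag) (u : world M) (phi : bform F Ag) : Prop :=
  match phi with
  | BF p => fsat (interp M u) p
  | BB i q => forall v, rel M i u v -> sat M v q
  | BNot q => ~ sat M u q
  | BAnd q r => sat M u q /\ sat M u r
  | BOr q r => sat M u q \/ sat M u r
  | BImp q r => sat M u q -> sat M u r
  | BE alpha q => forall i, alpha i -> forall v, rel M i u v -> sat M v q
  | BC alpha q => forall k, Ek M alpha k (fun v => sat M v q) u
  end.

Definition BCall (F Ag : Type) (q : bform F Ag) : bform F Ag := BC (fun _ => True) q.

Definition S5 (F Ag : Type) (M : kripke F Ag) : Prop :=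
  forall i, (forall u, rel M i u u)
         /\ (forall u v, rel M i u v -> rel M i v u)
         /\ (forall u v w, rel M i u v -> rel M i v w -> rel M i u w).

Inductive reachable (F Ag : Type) (M : kripke F Ag) (u : world M) : world M -> Prop :=
| reach_refl : reachable M u u
| reach_step : forall v j w, reachable M u v -> rel M j v w -> reachable M u w.

(* Common belief of all agents at s means truth at every world reachable from s,
   here at every world.  Locally, as M[i] is reflexive, u is one of its own
   i-successors, so "the i-successors of u disagree on psi" is the same as
   "some i-successor of u disagrees with u on psi". *)
From Stdlib Require Import Classical.

Section CommonBelief.

Context {F Ag : Type} {M : kripke F Ag}.

Lemma Ek_of_forall (alpha : Ag -> Prop) (P : world M -> Prop) :
  (forall u, P u) -> forall k u, Ek M alpha k P u.
Proof. intros HP k; induction k; simpl; auto. Qed.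

Lemma Ek_all_reachable {P : world M -> Prop} {s u : world M} :
  reachable M s u ->
  (forall k, Ek M (fun _ => True) k P s) -> forall k, Ek M (fun _ => True) k P u.
Proof.
  intros Hsu HP; induction Hsu as [|v j w _ IH Hvw]; auto.
  intro k; exact (IH (S k) j I w Hvw).
Qed.

Lemma Ek_all_iff_forall (P : world M -> Prop) (s : world M) :
  (forall u, reachable M s u) ->
  (forall k, Ek M (fun _ => True) k P s) <-> (forall u, P u).
Proof.
  intros Hreach; split.
  - intros HP u; exact (Ek_all_reachable (Hreach u) HP 0).
  - intros HP k; exact (Ek_of_forall _ _ HP k s).
Qed.

Lemma sat_undecided_iff (i : Ag) (psi : fform F) {u : world M} :
  rel M i u u ->
  sat M u (BAnd (BNot (BB i (BF psi))) (BNot (BB i (BF (FNot psi)))))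
  <-> exists v, rel M i u v /\ ~ (fsat (interp M u) psi <-> fsat (interp M v) psi).
Proof.
  intros Huu; simpl; split.
  - intros [Hnot_psi Hnot_npsi].
    destruct (classic (fsat (interp M u) psi)) as [Hu | Hu].
    + destruct (not_all_ex_not _ _ Hnot_psi) as [v Hv].
      destruct (imply_to_and _ _ Hv) as [Huv Hnv].
      exists v; split; [exact Huv | tauto].
    + destruct (not_all_ex_not _ _ Hnot_npsi) as [v Hv].
      destruct (imply_to_and _ _ Hv) as [Huv Hv_psi].
      exists v; split; [exact Huv | tauto].
  - intros [v [Huv Hdiff]]; split.
    + intros Hall; apply Hdiff; split; intros _; apply Hall; assumption.
    + intros Hall; apply Hdiff; split; intros Hpsi.
      * exfalso; exact (Hall u Huu Hpsi).
      * exfalso; exact (Hall v Huv Hpsi).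
Qed.

End CommonBelief.

Theorem lemma10 (F Ag : Type) (M : kripke F Ag) (s : world M)
  (HS5 : S5 M) (Hreach : forall u : world M, reachable M s u)
  (i : Ag) (psi : fform F) :
  sat M s (BCall (BAnd (BNot (BB i (BF psi))) (BNot (BB i (BF (FNot psi))))))
  <-> (forall u : world M, exists v : world M,
         rel M i u v /\ ~ (fsat (interp M u) psi <-> fsat (interp M v) psi)).
Proof.
  destruct (HS5 i) as [Hrefl _].
  unfold BCall; simpl sat at 1.
  rewrite (Ek_all_iff_forall _ s Hreach).
  split; intros H u; apply (sat_undecided_iff i psi (Hrefl u)), H.
Qed.
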